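(* For every integer $r$ there exists an integer $k=k(r)$ such that the following holds. If $G$ is a graph whose neighborhood complexity satisfies $\eta_G(m)\le r\cdot m$ for every positive integer $m$, then the vertices of $G$ can be (not necessarily properly) colored with $k$ colors such that for every non-isolated vertex $v$ of $G$ there exists a color which appears on an odd number of vertices of the open neighborhood $N(v)$.
   Context: All graphs are finite and simple. $N(v)$ denotes the open neighborhood of $v$ (not containing $v$). The neighborhood complexity of a graph $G$ is the function $\eta_G(m)=\max_{A}|\{N(v)\cap A : v\in V(G)\}|$, where the maximum is over all $m$-element subsets $A\subseteq V(G)$. *)

From mathcomp Require Import all_boot.
Set Implicit Arguments. Unset Strict Implicit. Unset Printing Implicit Defensive.

(* A finite simple graph: vertex type T : finType, adjacency e : rel T,
   assumed symmetric and irreflexive in the theorem statement. *)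

Definition nbhd (T : finType) (e : rel T) (v : T) : {set T} := [set u | e v u].

(* Neighborhood complexity eta_G(m) = max over m-element A of
   |{ N(v) ∩ A : v ∈ V(G) }|  (0 if no m-element subset exists). *)
Definition nbhd_complexity (T : finType) (e : rel T) (m : nat) : nat :=
  \max_(A : {set T} | #|A| == m) #|[set (nbhd e v :&: A) | v : T]|.

From mathcomp Require Import all_boot all_algebra zify.
Set Implicit Arguments. Unset Strict Implicit. Unset Printing Implicit Defensive.
Import GRing.Theory.

(* Colours are vectors of (Z/2)^D: it suffices to find labels l with a nonzero
   sum over every non-isolated neighbourhood, since a nonzero sum forces some
   fibre of l inside N(v) to be odd.  Keeping one vertex per neighbourhood, l is
   built by induction on the remaining set U: if the set X of v in U with
   |N(v) ∩ S| odd satisfies 1 <= |X| <= D, label the vertices of U \ X first and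
   add a vector a to the labels of S, choosing a outside the <= D sums of X.

   Either two neighbourhood traces on U differ in fewer than
   δ = 16 r^2 (r + 3) vertices, and S is the pair of their centres; or the traces
   form a δ-separated family.  Linear neighbourhood complexity bounds its traces
   on any I by r|I| + 1, hence its VC dimension by r + 3, and Haussler's packing
   argument (one-inclusion graphs have edge density at most the VC dimension,
   plus double counting over (s+1)-subsets of U) gives at most
   8 r (r + 3) |U| / δ + 2 sets.  Since distinct neighbourhoods give |U| <= r
   times the number of traces, |U| <= 4 r, and S = {a} for a neighbour a of a
   vertex of U works. *)

Lemma setD1_id (T : finType) (x : T) (A : {set T}) : x \notin A -> A :\ x = A.
Proof. by move=> xA; apply/setDidPl; rewrite disjoint_sym disjoints1. Qed.

Lemma sum_nat_of_bool (U : finType) (A : {pred U}) (P : pred U) :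
  \sum_(X in A) (P X : nat) = #|[set X in A | P X]|.
Proof.
rewrite -sum1_card [RHS]big_mkcond [LHS]big_mkcond /=.
by apply: eq_bigr => X _; rewrite !inE; case: (X \in A); case: (P X).
Qed.

Lemma sum_ord_ltn N m : \sum_(t < N) (t < m : nat) = minn m N.
Proof.
elim: N => [|N IH]; first by rewrite big_ord0 minn0.
by rewrite big_ord_recr /= IH; case: (ltnP N m) => lt_N_m; lia.
Qed.

Lemma sum_card_ltn (U : finType) (f : U -> nat) N :
  \sum_(t < N) #|[set Y | t < f Y]| = \sum_(Y : U) minn (f Y) N.
Proof.
rewrite (eq_bigr (fun t : 'I_N => \sum_(Y : U) (t < f Y : nat))); last first.
  by move=> t _; exact: (esym (sum_nat_of_bool predT (fun Y => t < f Y))).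
by rewrite exchange_big; apply: eq_bigr => Y _; rewrite sum_ord_ltn.
Qed.

Lemma card_setI1 (T : finType) (A : {set T}) a : #|A :&: [set a]| = (a \in A).
Proof.
have -> : A :&: [set a] = [set u in [set a] | u \in A] by apply/setP => u; rewrite !inE andbC.
by rewrite -sum_nat_of_bool big_set1.
Qed.

Lemma card_setI2 (T : finType) (A : {set T}) a b : a != b ->
  #|A :&: [set a; b]| = (a \in A) + (b \in A).
Proof.
move=> ab; have -> : A :&: [set a; b] = [set u in [set a; b] | u \in A].
  by apply/setP => u; rewrite !inE andbC.
by rewrite -sum_nat_of_bool big_setU1 ?big_set1 // inE.
Qed.

Lemma exists_transversal (aT : finType) (rT : eqType) (f : aT -> rT) (D : {set aT}) :
  exists A : {set aT}, [/\ A \subset D, {in A &, injective f} &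
                          {in D, forall x, exists2 a, a \in A & f a = f x}].
Proof.
pose rep x := odflt x [pick a in D | f a == f x].
have repP x : x \in D -> rep x \in D /\ f (rep x) = f x.
  by rewrite /rep => xD; case: pickP => [a /andP[aD /eqP]|/(_ x)]; rewrite ?xD ?eqxx.
have rep_eq x y : x \in D -> f x = f y -> rep x = rep y.
  move=> xD fxy; rewrite /rep (@eq_pick _ _ [pred a in D | f a == f y]) => [|a]; last first.
    by rewrite /= fxy.
  by case: pickP => // /(_ x); rewrite /= xD fxy eqxx.
exists (rep @: D); split.
- by apply/subsetP => _ /imsetP[x xD ->]; case: (repP x xD).
- move=> _ _ /imsetP[x xD ->] /imsetP[y yD ->] frep.
  by apply: rep_eq; rewrite // -(repP x xD).2 -(repP y yD).2.
- by move=> x xD; exists (rep x); [apply: imset_f | case: (repP x xD)].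
Qed.

Section OneInclusionGraph.
Variable T : finType.
Implicit Types (x y : T) (I J K X Y : {set T}) (G H : {set {set T}}).

Definition shatters G J := forall K, K \subset J -> exists2 X, X \in G & X :&: J = K.

Definition proj x G := [set X :\ x | X in G].

(* The lower endpoints of the edges of direction x of the one-inclusion graph of G. *)
Definition reduct x G := [set X in G | (x \notin X) && (x |: X \in G)].

Definition vc_bounded G d := forall J, shatters G J -> #|J| <= d.

Definition edge_count I G := \sum_(x in I) #|reduct x G|.

Lemma card_proj_reduct x G : #|G| = #|proj x G| + #|reduct x G|.
Proof.
set Gx := [set X : {set T} | x \in X].
have inj_Gx : {in G :&: Gx &, injective (fun X => X :\ x)}.
  move=> X Y; rewrite !inE => /andP[_ xX] /andP[_ xY] eXY.
  by rewrite -(setD1K xX) -(setD1K xY) eXY.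
have projE : proj x G = (G :\: Gx) :|: [set X :\ x | X in G :&: Gx].
  apply/setP=> Y; apply/idP/setUP => [/imsetP[X XG ->]|[]].
  - case xX: (x \in X); [right; apply/imsetP; exists X => // | left].
      by rewrite !inE XG xX.
    by rewrite setD1_id ?xX // !inE XG xX.
  - by rewrite !inE => /andP[xY YG]; apply/imsetP; exists Y; rewrite ?setD1_id.
  - by case/imsetP=> X; rewrite !inE => /andP[XG _] ->; apply/imsetP; exists X.
have reductE : reduct x G = (G :\: Gx) :&: [set X :\ x | X in G :&: Gx].
  apply/setP=> Y; rewrite !inE.
  apply/andP/andP => [[YG /andP[xY xYG]]|[/andP[xY YG] YX]].
    split; first by rewrite YG xY.
    by apply/imsetP; exists (x |: Y); rewrite ?setU1K // !inE xYG eqxx.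
  case/imsetP: YX => X; rewrite !inE => /andP[XG xX] eY.
  by rewrite YG xY eY setD1K.
rewrite projE reductE cardsUI card_in_imset //.
by rewrite addnC cardsID.
Qed.

Lemma card_reduct_proj x y G : y != x ->
  #|reduct y G| <= #|reduct y (proj x G)| + #|reduct y (reduct x G)|.
Proof.
move=> yx; set E := reduct y G; set Gx := [set X : {set T} | x \in X].
have inj_Gx : {in E :&: Gx &, injective (fun X => X :\ x)}.
  move=> X Y; rewrite !inE => /andP[_ xX] /andP[_ xY] eXY.
  by rewrite -(setD1K xX) -(setD1K xY) eXY.
have sub_union : (E :\: Gx) :|: [set X :\ x | X in E :&: Gx] \subset reduct y (proj x G).
  apply/subsetP=> Z; rewrite !inE => /orP[].
  - move=> /andP[xZ /andP[ZG /andP[yZ yZG]]].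
    rewrite yZ; apply/andP; split; apply/imsetP.
      by exists Z; rewrite ?setD1_id.
    by exists (y |: Z); rewrite ?setD1_id // !inE negb_or xZ eq_sym yx.
  - case/imsetP=> X; rewrite !inE => /andP[/and3P[XG yX yXG] xX] ->.
    rewrite in_setD1 negb_and yX orbT; apply/andP; split; apply/imsetP.
      by exists X.
    exists (y |: X) => //; apply/setP=> z; rewrite !inE.
    by case: (eqVneq z y) => [->|]; rewrite ?yx.
have sub_inter : (E :\: Gx) :&: [set X :\ x | X in E :&: Gx] \subset reduct y (reduct x G).
  apply/subsetP=> Z; rewrite !inE => /andP[/and4P[xZ ZG yZ yZG]].
  case/imsetP=> X; rewrite !inE => /andP[/and3P[XG _ yXG] xX] eZ.
  have eX : X = x |: Z by rewrite eZ setD1K.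
  by rewrite ZG xZ yZ yZG -eX XG negb_or xZ eq_sym yx setUCA -eX.
rewrite -(cardsID Gx E) -(card_in_imset inj_Gx) addnC -cardsUI.
by apply: leq_add; apply: subset_leq_card.
Qed.

Lemma shatters_set0 G X : X \in G -> shatters G set0.
Proof. by move=> XG K; rewrite subset0 => /eqP->; exists X; rewrite ?setI0. Qed.

Lemma shatters_trace G I H J :
  H \subset [set X :&: I | X in G] -> shatters H J -> shatters G J.
Proof.
move=> /subsetP HG shJ; have JI : J \subset I.
  case: (shJ J (subxx J)) => _ /HG/imsetP[X _ ->] XJ.
  by rewrite -XJ; apply: subset_trans (subsetIl _ _) (subsetIr _ _).
move=> K KJ; case: (shJ K KJ) => _ /HG/imsetP[X XG ->] <-.
by exists X; rewrite // -setIA (setIidPr JI).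
Qed.

Lemma shatters_proj x G J : shatters (proj x G) J -> shatters G J.
Proof.
move=> shJ; have xJ : x \notin J.
  case: (shJ J (subxx J)) => _ /imsetP[X _ ->] XJ.
  by apply/negP=> xJ; move/setP/(_ x): XJ; rewrite !inE eqxx xJ.
move=> K KJ; case: (shJ K KJ) => _ /imsetP[X XG ->] <-.
exists X => //; apply/setP=> z; rewrite !inE.
by case: (eqVneq z x) => [->|]; rewrite ?(negbTE xJ) ?andbF.
Qed.

Lemma shatters_reduct x G J :
  shatters (reduct x G) J -> x \notin J /\ shatters G (x |: J).
Proof.
move=> shJ; have xJ : x \notin J.
  case: (shJ J (subxx J)) => X; rewrite inE => /and3P[_ xX _] XJ.
  by apply/negP=> xJ; move/setP/(_ x): XJ; rewrite !inE xJ (negbTE xX).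
split=> // K; rewrite -subDset => KJ.
case: (shJ _ KJ) => X; rewrite inE => /and3P[XG xX xXG] XJ.
case xK: (x \in K).
  by exists (x |: X); rewrite // -setUIr XJ setD1K.
exists X => //; rewrite setIUr XJ setD1_id ?xK //.
suff -> : X :&: [set x] = set0 by rewrite set0U.
by apply/setP=> z; rewrite !inE; case: (eqVneq z x) => [->|]; rewrite ?(negbTE xX) ?andbF.
Qed.

Lemma edge_count_le I G d :
  {in G, forall X, X \subset I} -> vc_bounded G d -> edge_count I G <= d * #|G|.
Proof.
move: {2}#|I| (leqnn #|I|) => n; elim: n I G d => [|n IH] I G d szI GI vcG.
  by move: szI; rewrite leqn0 cards_eq0 => /eqP->; rewrite /edge_count big_set0.
have [->|[x xI]] := set_0Vmem I; first by rewrite /edge_count big_set0.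
have szIx : #|I :\ x| <= n by move: szI; rewrite (cardsD1 x) xI.
have projI : {in proj x G, forall X, X \subset I :\ x}.
  move=> _ /imsetP[X XG ->]; exact: setSD (GI X XG).
have reductI : {in reduct x G, forall X, X \subset I :\ x}.
  by move=> X; rewrite inE => /and3P[XG xX _]; rewrite subsetD1 GI.
have vc_proj : vc_bounded (proj x G) d.
  by move=> J /shatters_proj; apply: vcG.
have vc_reduct : vc_bounded (reduct x G) d.-1.
  move=> J /shatters_reduct[xJ /vcG]; rewrite cardsU1 xJ; lia.
have d_gt0 : 0 < #|reduct x G| -> 0 < d.
  case/card_gt0P=> X /shatters_set0/shatters_reduct[_ /vcG].
  by rewrite setU0 cards1.
have split_edges : edge_count I G <=
    #|reduct x G| + edge_count (I :\ x) (proj x G) + edge_count (I :\ x) (reduct x G).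
  rewrite /edge_count (bigD1 x xI) -addnA leq_add2l -big_split /=.
  rewrite (eq_bigl (fun y => y \in I :\ x)) => [|y]; last by rewrite !inE andbC.
  by apply: leq_sum => y /setD1P[yx _]; apply: card_reduct_proj.
apply: (leq_trans split_edges); rewrite (card_proj_reduct x G).
have e_proj := IH _ _ _ szIx projI vc_proj.
have e_reduct := IH _ _ _ szIx reductI vc_reduct.
have reduct_le : #|reduct x G| + d.-1 * #|reduct x G| <= d * #|reduct x G|.
  case: (posnP #|reduct x G|) => [->|/d_gt0]; first by rewrite muln0.
  by case: (d) => // d' _; rewrite mulSn.
apply: (leq_trans (leq_add (leq_add (leqnn _) e_proj) e_reduct)).
by rewrite addnAC mulnDr addnC leq_add2l.
Qed.

End OneInclusionGraph.

Lemma leq_sq_exp2 j : 4 <= j -> j * j <= 2 ^ j.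
Proof.
elim: j => // j IH; rewrite leq_eqVlt => /orP[/eqP <- // | lt3j].
by have := IH lt3j; rewrite expnS; nia.
Qed.

Lemma exp2_le_affine r j : 2 ^ j <= r * j + 1 -> j <= r + 3.
Proof.
move=> le_exp; rewrite leqNgt; apply/negP => lt_j.
by have := leq_sq_exp2 (_ : 4 <= j); nia.
Qed.

Lemma vc_bounded_of_traces (T : finType) (G : {set {set T}}) (B : {set T}) (r : nat) :
  {in G, forall X : {set T}, X \subset B} ->
  (forall I : {set T}, I \subset B -> #|[set X :&: I | X in G]| <= r * #|I| + 1) ->
  vc_bounded G (r + 3).
Proof.
move=> GB traceG J shJ; have JB : J \subset B.
  by case: (shJ J (subxx J)) => X XG XJ; rewrite -XJ (subset_trans (subsetIl _ _) (GB X XG)).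
apply: exp2_le_affine; rewrite -card_powerset (leq_trans _ (traceG J JB)) //.
apply/subset_leq_card/subsetP => K; rewrite inE => /shJ[X XG <-]; exact: imset_f.
Qed.

Section Separation.
Variable U : finType.
Implicit Types (C X Z : {set U}) (Q : {set {set U}}).

Definition separated δ Q := {in Q &, forall X Z, X != Z -> δ <= #|X :\: Z| + #|Z :\: X|}.

Lemma sum_card_mem_notin Q C :
  \sum_(x in C) #|[set X in Q | x \in X]| * #|[set Z in Q | x \notin Z]| =
  \sum_(X in Q) \sum_(Z in Q) #|(X :\: Z) :&: C|.
Proof.
rewrite (eq_bigr (fun x => \sum_(X in Q) \sum_(Z in Q) ((x \in X) && (x \notin Z) : nat))).
  rewrite exchange_big; apply: eq_bigr => X _; rewrite exchange_big.
  apply: eq_bigr => Z _; rewrite sum_nat_of_bool; apply: eq_card => x.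
  by rewrite !inE; case: (x \in C); case: (x \in X); case: (x \in Z).
move=> x _; rewrite -!sum_nat_of_bool big_distrl; apply: eq_bigr => X _.
by rewrite big_distrr; apply: eq_bigr => Z _; case: (x \in X); case: (x \in Z).
Qed.

Lemma separated_sum_ge δ Q : separated δ Q ->
  δ * (#|Q| * #|Q|.-1) <= 2 * \sum_(X in Q) \sum_(Z in Q) #|X :\: Z|.
Proof.
move=> sepQ.
have -> : 2 * \sum_(X in Q) \sum_(Z in Q) #|X :\: Z| =
          \sum_(X in Q) \sum_(Z in Q) (#|X :\: Z| + #|Z :\: X|).
  rewrite mul2n -addnn {2}exchange_big -big_split /=.
  by apply: eq_bigr => X _; rewrite big_split.
have -> : δ * (#|Q| * #|Q|.-1) = \sum_(X in Q) \sum_(Z in Q) ((X != Z) * δ).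
  rewrite mulnCA [δ * _]mulnC -sum_nat_const; apply: eq_bigr => X XQ.
  rewrite -big_distrl /=; congr (_ * _).
  rewrite sum_nat_of_bool (cardsD1 X Q) XQ add1n /=.
  by apply: eq_card => Z; rewrite !inE andbC eq_sym.
apply: leq_sum => X XQ; apply: leq_sum => Z ZQ.
by case: (eqVneq X Z) => [//|neXZ]; rewrite mul1n sepQ.
Qed.

Lemma card_symdiff X Z : #|(X :\: Z) :|: (Z :\: X)| = #|X :\: Z| + #|Z :\: X|.
Proof.
rewrite cardsU; suff -> : (X :\: Z) :&: (Z :\: X) = set0 by rewrite cards0 subn0.
by apply/setP => x; rewrite !inE; case: (x \in X); case: (x \in Z); rewrite ?andbF.
Qed.

Lemma symdiff_gt0 X Z : X != Z -> 0 < #|X :\: Z| + #|Z :\: X|.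
Proof.
apply: contraNT; rewrite -leqNgt leqn0 addn_eq0 !cards_eq0 !setD_eq0 => XZ.
by rewrite eqEsubset.
Qed.

End Separation.

Section KSubsets.
Variable T : finType.
Implicit Types (B I : {set T}).

Definition ksubsets B k := [set I : {set T} | (I \subset B) && (#|I| == k)].

Lemma ksubsets_neq0 B k : k <= #|B| -> ksubsets B k != set0.
Proof.
elim: k => [|k IH] leB; first by apply/set0Pn; exists set0; rewrite inE sub0set cards0.
case/set0Pn: (IH (ltnW leB)) => I; rewrite inE => /andP[IB /eqP cardI].
have /card_gt0P[x] : 0 < #|B :\: I| by rewrite cardsDS // cardI subn_gt0.
rewrite inE => /andP[xI xB]; apply/set0Pn; exists (x |: I).
by rewrite inE subUset sub1set xB IB cardsU1 xI cardI add1n eqxx.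
Qed.

Lemma sum_ksubsets_exchange B k (g : {set T} -> T -> nat) :
  \sum_(I in ksubsets B k.+1) \sum_(x in I) g (I :\ x) x =
  \sum_(I in ksubsets B k) \sum_(x in B :\: I) g I x.
Proof.
rewrite !pair_big_dep /=.
rewrite (reindex_onto (fun p : {set T} * T => (p.2 |: p.1, p.2))
                      (fun p : {set T} * T => (p.1 :\ p.2, p.2))) /=; last first.
  by case=> I x /= /andP[_ xI]; rewrite setD1K.
apply: eq_big => [[I x]|[I x]] /=.
- rewrite !inE xpair_eqE eqxx andbT.
  case xI: (x \in I).
  + rewrite (_ : ((x |: I) :\ x == I) = false) ?andbF //.
    by apply/negbTE/eqP=> eI; move: xI; rewrite -eI !inE eqxx.
  + rewrite setU1K ?xI // eqxx andbT /= andbT cardsU1 xI add1n eqSS subUset sub1set.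
    by case: (x \in B); case: (I \subset B); rewrite /= ?andbT ?andbF.
- by move=> /andP[_ /eqP [->]].
Qed.

Lemma card_ksubsets_exchange B k :
  #|ksubsets B k.+1| * k.+1 = #|ksubsets B k| * (#|B| - k).
Proof.
have := sum_ksubsets_exchange B k (fun _ _ => 1).
rewrite (eq_bigr (fun _ => k.+1)) => [|I]; last first.
  by rewrite inE => /andP[_ /eqP cardI]; rewrite sum1_card cardI.
rewrite [in X in _ = X -> _](eq_bigr (fun _ => #|B| - k)) => [|I]; last first.
  by rewrite inE => /andP[IB /eqP cardI]; rewrite sum1_card cardsD (setIidPr IB) cardI.
by rewrite !sum_nat_const.
Qed.

End KSubsets.

Lemma packing_ineq_bound r d δ b f s :
  0 < δ -> s * δ <= 4 * d * b -> 4 * d * b < s.+1 * δ ->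
  s.+1 * (δ * (f - (r * s + 1))) <= 2 * b * (d * f) ->
  δ * f <= 8 * r * d * b + 2 * δ.
Proof.
move=> δ_gt0 sδ_le lt_sδ ineq.
have rsδ_le : r * (s * δ) <= r * (4 * d * b) by rewrite leq_mul2l sδ_le orbT.
case: (leqP f (r * s + 1)) => [f_le|f_gt].
  apply: leq_trans (leq_mul (leqnn δ) f_le) _; nia.
have g_gt0 : 0 < f - (r * s + 1) by rewrite subn_gt0.
have lt4 : 4 * d * b * (f - (r * s + 1)) < 2 * b * (d * f).
  by apply: leq_trans ineq; rewrite mulnA ltn_pmul2r.
have db_gt0 : 0 < d * b by nia.
have : 2 * (f - (r * s + 1)) < f.
  by rewrite -(ltn_pmul2l (_ : 0 < 2 * (d * b))); nia.
nia.
Qed.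

Section Packing.
Variable T : finType.
Variable F : {set {set T}}.
Implicit Types (x : T) (B I J X Y : {set T}).

Definition trace_class I Y := [set X in F | X :&: I == Y].

Definition class_with I x Y := #|[set X in trace_class I Y | x \in X]|.

Definition class_without I x Y := #|[set X in trace_class I Y | x \notin X]|.

(* Haussler's weight of x over I: bounded above through the edge density of
   one-inclusion graphs and below through separation. *)
Definition split_weight I x :=
  \sum_(Y : {set T}) minn (class_with I x Y) (class_without I x Y).

Lemma sum_card_trace_class I : \sum_(Y : {set T}) #|trace_class I Y| = #|F|.
Proof.
rewrite -[#|F|]sum1_card [RHS](partition_big (fun X => X :&: I) xpredT) //=.
by apply: eq_bigr => Y _; rewrite -sum1_card; apply: eq_bigl => X; rewrite inE.
Qed.

Lemma trace_class_sub I Y : trace_class I Y != set0 -> Y \subset I.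
Proof. by case/set0Pn=> X; rewrite inE => /andP[_ /eqP<-]; apply: subsetIr. Qed.

Lemma trace_class_imset I Y :
  trace_class I Y != set0 -> Y \in [set X :&: I | X in F].
Proof. by case/set0Pn=> X; rewrite inE => /andP[XF /eqP<-]; apply: imset_f. Qed.

Lemma class_without_setD1 I x Y : x \in I -> x \notin Y ->
  class_without (I :\ x) x Y = #|trace_class I Y|.
Proof.
move=> xI xY; apply: eq_card => X; rewrite !inE; case: (X \in F) => //=.
apply/andP/eqP => [[/eqP<- xX]|XY].
  by apply/setP=> z; rewrite !inE; case: (eqVneq z x) => [->|]; rewrite ?(negbTE xX).
have xX : x \notin X by apply: contra xY; rewrite -XY inE => ->.
split=> //; apply/eqP.
by rewrite -XY setDE setIA -setDE setD1_id // inE (negbTE xX).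
Qed.

Lemma class_with_setD1 I x Y : x \in I -> x \notin Y ->
  class_with (I :\ x) x Y = #|trace_class I (x |: Y)|.
Proof.
move=> xI xY; apply: eq_card => X; rewrite !inE; case: (X \in F) => //=.
apply/andP/eqP => [[/eqP<- xX]|XY].
  by apply/setP=> z; rewrite !inE; case: (eqVneq z x) => [->|]; rewrite ?xX ?xI.
have xX : x \in X by move/setP/(_ x): XY; rewrite !inE eqxx xI andbT.
by split=> //; apply/eqP; rewrite setDE setIA -setDE XY setU1K.
Qed.

Lemma class_with_mem I x Y : x \in Y -> class_with (I :\ x) x Y = 0.
Proof.
move=> xY; apply/eqP; rewrite cards_eq0; apply/eqP/setP=> X; rewrite !inE.
by apply/negbTE; apply: contraL xY => /andP[/andP[_ /eqP<-] _]; rewrite !inE eqxx andbF.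
Qed.

Lemma class_without_le I x Y : class_without I x Y <= #|F|.
Proof. by apply: subset_leq_card; apply/subsetP=> X; rewrite !inE => /andP[/andP[]]. Qed.

Definition trace_level I t := [set Y | t < #|trace_class I Y|].

Lemma split_weight_setD1 I x : x \in I ->
  split_weight (I :\ x) x = \sum_(t < #|F|) #|reduct x (trace_level I t)|.
Proof.
move=> xI; rewrite /split_weight.
under eq_bigr => Y _ do
  rewrite -[minn _ _](minn_idPl (leq_trans (geq_minr _ _) (class_without_le _ _ _))).
rewrite -sum_card_ltn; apply: eq_bigr => t _; apply: eq_card => Y.
rewrite !inE leq_min; case: (boolP (x \in Y)) => [xY|xY].
  by rewrite class_with_mem //= andbF.
by rewrite class_with_setD1 ?class_without_setD1 // andbC.
Qed.

Lemma trace_level_class I t Y : Y \in trace_level I t -> trace_class I Y != set0.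
Proof. by rewrite inE -card_gt0; apply: leq_ltn_trans. Qed.

Lemma sum_split_weight_le d I :
  vc_bounded F d -> \sum_(x in I) split_weight (I :\ x) x <= d * #|F|.
Proof.
move=> vcF; rewrite (eq_bigr _ (@split_weight_setD1 I)) exchange_big /=.
have level_le t : edge_count I (trace_level I t) <= d * #|trace_level I t|.
  apply: edge_count_le => [Y /trace_level_class/trace_class_sub //|J shJ].
  apply/vcF/(shatters_trace _ shJ)/subsetP => Y /trace_level_class.
  exact: trace_class_imset.
apply: (@leq_trans (\sum_(t < #|F|) d * #|trace_level I t|)).
  by apply: leq_sum => t _; apply: level_le.
rewrite -big_distrr leq_mul2l sum_card_ltn -[X in _ <= X](sum_card_trace_class I).
by apply/orP; right; apply: leq_sum => Y _; apply: geq_minl.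
Qed.

Section Separated.
Variables (B : {set T}) (δ : nat).
Hypotheses (FB : {in F, forall X, X \subset B}) (sepF : separated δ F).

Lemma class_with_without I x Y :
  class_with I x Y + class_without I x Y = #|trace_class I Y|.
Proof.
rewrite -[RHS]sum1_card /class_with /class_without -!sum_nat_of_bool -big_split.
by apply: eq_bigr => X _; case: (x \in X).
Qed.

Lemma trace_class_setD I Y X Z : X \in trace_class I Y -> Z \in trace_class I Y ->
  (X :\: Z) :&: (B :\: I) = X :\: Z.
Proof.
rewrite !inE => /andP[XF /eqP XY] /andP[_ /eqP ZY]; apply/setIidPl/subsetP => z.
rewrite !inE => /andP[zZ zX]; rewrite (subsetP (FB XF)) // andbT.
apply: contra zZ => zI.
by have /setIP[] : z \in Z :&: I by rewrite ZY -XY inE zX.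
Qed.

Lemma split_weight_class_ge I Y :
  δ * #|trace_class I Y|.-1 <=
  2 * \sum_(x in B :\: I) minn (class_with I x Y) (class_without I x Y).
Proof.
set Q := trace_class I Y.
have sepQ : separated δ Q.
  by move=> X Z; rewrite !inE => /andP[XF _] /andP[ZF _]; apply: sepF.
have pairsE : \sum_(x in B :\: I) class_with I x Y * class_without I x Y =
              \sum_(X in Q) \sum_(Z in Q) #|X :\: Z|.
  rewrite sum_card_mem_notin; apply: eq_bigr => X XQ; apply: eq_bigr => Z ZQ.
  by rewrite (trace_class_setD XQ ZQ).
have prod_le x : class_with I x Y * class_without I x Y <=
                 #|Q| * minn (class_with I x Y) (class_without I x Y).
  rewrite -(class_with_without I x); nia.
have [->|Q_gt0] := posnP #|Q|; first by rewrite muln0.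
rewrite -(leq_pmul2l Q_gt0) mulnCA; apply: leq_trans (separated_sum_ge sepQ) _.
rewrite -pairsE mulnCA leq_mul2l big_distrr /=.
by apply: leq_sum => x _; apply: prod_le.
Qed.

Lemma sum_split_weight_ge I :
  δ * (#|F| - #|[set X :&: I | X in F]|) <= 2 * \sum_(x in B :\: I) split_weight I x.
Proof.
rewrite /split_weight exchange_big big_distrr /=.
apply: (@leq_trans (\sum_(Y : {set T}) δ * #|trace_class I Y|.-1)); last first.
  by apply: leq_sum => Y _; apply: split_weight_class_ge.
rewrite -big_distrr leq_mul2l /= leq_subLR -{1}(sum_card_trace_class I).
apply/orP; right; apply: (@leq_trans
  (\sum_(Y : {set T}) ((trace_class I Y != set0) + #|trace_class I Y|.-1))).
  by apply: leq_sum => Y _; rewrite -card_gt0; case: #|_|.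
rewrite big_split leq_add2r /=.
apply: (@leq_trans #|[set Y in predT | trace_class I Y != set0]|).
  by rewrite -sum_nat_of_bool.
by apply/subset_leq_card/subsetP => Y; rewrite inE => /trace_class_imset.
Qed.

Variables r d : nat.
Hypotheses (traceF : forall I, I \subset B -> #|[set X :&: I | X in F]| <= r * #|I| + 1)
           (vcF : vc_bounded F d).

Lemma packing_ineq s : s <= #|B| ->
  s.+1 * (δ * (#|F| - (r * s + 1))) <= 2 * (#|B| - s) * (d * #|F|).
Proof.
move=> leB; set N1 := #|ksubsets B s.+1|; set N0 := #|ksubsets B s|.
have upper : \sum_(I in ksubsets B s.+1) \sum_(x in I) split_weight (I :\ x) x
             <= N1 * (d * #|F|).
  by rewrite -sum_nat_const; apply: leq_sum => I _; apply: sum_split_weight_le.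
have lower : N0 * (δ * (#|F| - (r * s + 1))) <=
             2 * \sum_(I in ksubsets B s) \sum_(x in B :\: I) split_weight I x.
  rewrite -sum_nat_const big_distrr; apply: leq_sum => I.
  rewrite inE => /andP[IB /eqP cardI]; apply: leq_trans (sum_split_weight_ge I).
  by rewrite leq_mul2l leq_sub2l ?orbT // -cardI traceF.
have N0_gt0 : 0 < N0 by rewrite card_gt0 ksubsets_neq0.
rewrite -(leq_pmul2l N0_gt0) mulnCA.
apply: leq_trans (leq_mul (leqnn s.+1) lower) _.
rewrite -sum_ksubsets_exchange.
apply: leq_trans (leq_mul (leqnn _) (leq_mul (leqnn 2) upper)) _.
have := card_ksubsets_exchange B s; rewrite -/N1 -/N0.
move: (d * #|F|) (#|B| - s) => a b countE.
nia.
Qed.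

Lemma packing_card : δ * #|F| <= 8 * r * d * #|B| + 2 * δ.
Proof.
have [->|δ_gt0] := posnP δ; first by rewrite mul0n.
set s := 4 * d * #|B| %/ δ.
have sδ_le : s * δ <= 4 * d * #|B| := leq_divM _ _.
have lt_sδ : 4 * d * #|B| < s.+1 * δ := ltn_ceil _ δ_gt0.
have [leB|gtB] := leqP s #|B|.
  apply: packing_ineq_bound δ_gt0 sδ_le lt_sδ (leq_trans (packing_ineq leB) _).
  by rewrite leq_mul2r leq_mul2l leq_subr !orbT.
have traceB : [set X :&: B | X in F] = F.
  by rewrite -[RHS]imset_id; apply: eq_in_imset => X XF; apply/setIidPl/FB.
have := traceF (subxx B); rewrite traceB => cardF.
have δB_le : δ * #|B| <= 4 * d * #|B|.
  by apply: leq_trans sδ_le; rewrite mulnC leq_mul2r ltnW ?orbT.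
apply: (@leq_trans (r * (δ * #|B|) + δ)).
  by rewrite mulnCA -[X in _ + X]muln1 -mulnDr leq_mul2l cardF orbT.
have := leq_mul (leqnn r) δB_le; nia.
Qed.

End Separated.

End Packing.

Definition odd_bound r := 16 * r * r * (r + 3) + 4 * r.

Section NeighborhoodTraces.
Variables (T : finType) (e : rel T) (r : nat).
Hypotheses (esym : symmetric e)
           (heta : forall m, 0 < m -> nbhd_complexity e m <= r * m).
Implicit Types (a b u v : T) (A I S U X : {set T}).

Lemma in_nbhd u v : (u \in nbhd e v) = e v u.
Proof. by rewrite inE. Qed.

Lemma card_nbhd_traces A : 0 < #|A| -> #|[set nbhd e v :&: A | v : T]| <= r * #|A|.
Proof.
move=> A_gt0; apply: leq_trans (heta A_gt0).
exact: (@leq_bigmax_cond _ (fun B : {set T} => #|B| == #|A|)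
          (fun B => #|[set nbhd e v :&: B | v : T]|) A (eqxx _)).
Qed.

Definition nbhd_traces U := [set nbhd e a :&: U | a : T].

Lemma nbhd_traces_sub U : {in nbhd_traces U, forall X, X \subset U}.
Proof. by move=> _ /imsetP[a _ ->]; apply: subsetIr. Qed.

Lemma card_nbhd_traces_on U I : I \subset U ->
  #|[set X :&: I | X in nbhd_traces U]| <= r * #|I| + 1.
Proof.
move=> IU; have -> : [set X :&: I | X in nbhd_traces U] = [set nbhd e a :&: I | a : T].
  rewrite -imset_comp; apply: eq_imset => a /=; by rewrite -setIA (setIidPr IU).
have [I0|I_gt0] := posnP #|I|; last by rewrite (leq_trans (card_nbhd_traces I_gt0)) ?leq_addr.
move/eqP: I0; rewrite cards_eq0 => /eqP->.
rewrite cards0 muln0 add0n -(cards1 (set0 : {set T})).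
by apply/subset_leq_card/subsetP => _ /imsetP[a _ ->]; rewrite setI0 inE.
Qed.

Lemma card_le_nbhd_traces U : {in U &, injective (nbhd e)} ->
  #|U| <= r * #|nbhd_traces U|.
Proof.
move=> Uinj; have [A [_ Ainj Acover]] := exists_transversal (fun a => nbhd e a :&: U) setT.
have cardA : #|A| = #|nbhd_traces U|.
  rewrite -(card_in_imset Ainj); apply: eq_card => X; apply/imsetP/imsetP.
    by case=> a _ ->; exists a.
  by case=> a _ ->; have [a' a'A fa'] := Acover a (in_setT a); exists a'.
have traceA_inj : {in U &, injective (fun v => nbhd e v :&: A)}.
  move=> v w vU wU eAvw; apply: Uinj => //; apply/setP => a; rewrite !in_nbhd.
  have [a' a'A fa'] := Acover a (in_setT a).
  have same x : x \in U -> e x a' = e x a.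
    by move=> xU; move/setP/(_ x): fa'; rewrite !inE xU !andbT ![e _ x]esym.
  rewrite -(same v vU) -(same w wU).
  by move/setP/(_ a'): eAvw; rewrite !inE a'A !andbT.
have [A0|A_gt0] := posnP #|A|.
  suff -> : U = set0 by rewrite cards0.
  apply/setP => v; rewrite inE; apply/negbTE/negP => _.
  by have [a' a'A _] := Acover v (in_setT v); rewrite (card0_eq A0) in a'A.
rewrite -(card_in_imset traceA_inj) -cardA (leq_trans _ (card_nbhd_traces A_gt0)) //.
by apply/subset_leq_card/subsetP => _ /imsetP[v _ ->]; apply: imset_f.
Qed.

Lemma separated_nbhd_traces_small U : {in U &, injective (nbhd e)} ->
  separated (16 * r * r * (r + 3)) (nbhd_traces U) -> #|U| <= 4 * r.
Proof.
move=> Uinj sepU; have cardU := card_le_nbhd_traces Uinj.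
have traceU := @card_nbhd_traces_on U.
have := packing_card (@nbhd_traces_sub U) sepU traceU
          (vc_bounded_of_traces (@nbhd_traces_sub U) traceU).
move: #|nbhd_traces U| cardU => f cardU pack.
have [r0|r_gt0] := posnP r; first by move: cardU; rewrite r0.
have f_le : f <= 4.
  have c_gt0 : 0 < 8 * (r * r * (r + 3)) by rewrite !muln_gt0 r_gt0 addn_gt0 orbT.
  rewrite -(leq_pmul2l c_gt0); nia.
by apply: (leq_trans cardU); rewrite mulnC leq_mul2r f_le orbT.
Qed.

Lemma odd_set_pair U a b : a != b ->
  [set v in U | odd #|nbhd e v :&: [set a; b]|] =
  ((nbhd e a :&: U) :\: (nbhd e b :&: U)) :|: ((nbhd e b :&: U) :\: (nbhd e a :&: U)).
Proof.
move=> ab; apply/setP => v; rewrite !inE card_setI2 // !in_nbhd (esym v a) (esym v b).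
by case: (v \in U); case: (e a v); case: (e b v); rewrite ?andbF.
Qed.

Lemma odd_set1 U a : [set v in U | odd #|nbhd e v :&: [set a]|] = nbhd e a :&: U.
Proof.
apply/setP => v; rewrite !inE card_setI1 in_nbhd esym.
by case: (v \in U); case: (e a v); rewrite ?andbF.
Qed.

Lemma exists_small_odd_set U : U != set0 -> {in U &, injective (nbhd e)} ->
  {in U, forall v, nbhd e v != set0} ->
  exists S, 0 < #|[set v in U | odd #|nbhd e v :&: S|]| <= odd_bound r.
Proof.
move=> U0 Uinj Unz; set δ := 16 * r * r * (r + 3).
have δ_le : δ <= odd_bound r by apply: leq_addr.
pose trace a := nbhd e a :&: U.
have dichotomy : (exists a b, trace a != trace b /\
    #|trace a :\: trace b| + #|trace b :\: trace a| < δ) \/ separated δ (nbhd_traces U).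
  case: (boolP [exists a, exists b, (trace a != trace b) &&
      (#|trace a :\: trace b| + #|trace b :\: trace a| < δ)]).
    by case/existsP => a /existsP[b /andP[neq_ab close]]; left; exists a, b.
  move=> none; right => _ _ /imsetP[a _ ->] /imsetP[b _ ->] neq_ab.
  rewrite leqNgt; apply: contra none => close.
  by apply/existsP; exists a; apply/existsP; exists b; rewrite neq_ab.
case: dichotomy => [[a [b [neq_ab close]]]|sepU].
  have ab : a != b by apply: contraNneq neq_ab => ->.
  exists [set a; b]; rewrite odd_set_pair // card_symdiff symdiff_gt0 //=.
  exact: leq_trans (ltnW close) δ_le.
have [v0 v0U] := set0Pn _ U0; have [a av0] := set0Pn _ (Unz v0 v0U).
exists [set a]; rewrite odd_set1; apply/andP; split.
  by apply/card_gt0P; exists v0; rewrite !inE v0U andbT esym -in_nbhd.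
apply: leq_trans (subset_leq_card (subsetIr _ U)) _.
exact: leq_trans (separated_nbhd_traces_small Uinj sepU) (leq_addl _ _).
Qed.

End NeighborhoodTraces.

Section ParityLabelling.
Variable L : finZmodType.
Hypothesis addxx : forall x : L, (x + x = 0)%R.

Lemma oppr_id (x : L) : (- x = x)%R.
Proof. by apply/eqP; rewrite eq_sym -addr_eq0 addxx. Qed.

Lemma mulrn_odd (x : L) n : (x *+ n = x *+ odd n)%R.
Proof.
by elim: n => // n IH; rewrite mulrS IH /=; case: (odd n); rewrite ?mulr1n ?addxx ?addr0.
Qed.

Lemma exists_odd_fibre (W : finType) (A : {set W}) (l : W -> L) :
  (\sum_(u in A) l u != 0)%R -> exists w, odd #|[set u in A | l u == w]|.
Proof.
case: (boolP [exists w, odd #|[set u in A | l u == w]|]) => [/existsP //|/existsPn even].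
case/eqP; rewrite (partition_big l xpredT) //=; apply: big1 => w _.
rewrite (eq_bigr (fun _ => w)) => [|u /andP[_ /eqP//]].
rewrite (eq_bigl (mem [set u in A | l u == w])) => [|u]; last by rewrite !inE.
by rewrite sumr_const mulrn_odd (negbTE (even w)).
Qed.

Lemma exists_parity_labelling (V W : finType) (N : V -> {set W}) (U0 : {set V}) D :
  D < #|L| ->
  (forall U : {set V}, U \subset U0 -> U != set0 ->
     exists S, 0 < #|[set v in U | odd #|N v :&: S|]| <= D) ->
  exists l : W -> L, {in U0, forall v, (\sum_(u in N v) l u != 0)%R}.
Proof.
move=> D_lt; move: {2}#|U0| (leqnn #|U0|) => n; elim: n U0 => [|n IH] U0 szU0 oddU.
  exists (fun _ => 0%R) => v; move: szU0; rewrite leqn0 cards_eq0 => /eqP->.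
  by rewrite inE.
have [->|U0_neq0] := eqVneq U0 set0; first by exists (fun _ => 0%R) => v; rewrite inE.
have [S /andP[X_gt0 X_le]] := oddU U0 (subxx _) U0_neq0.
set X := [set v in U0 | odd #|N v :&: S|] in X_gt0 X_le.
have [l' hl'] : exists l' : W -> L, {in U0 :\: X, forall v, (\sum_(u in N v) l' u != 0)%R}.
  apply: IH => [|U UU0]; last by apply: oddU; apply: subset_trans UU0 (subsetDl _ _).
  have XU0 : X \subset U0 by apply/subsetP => v; rewrite inE => /andP[].
  by move: szU0; rewrite cardsD (setIidPr XU0); lia.
have [a] : exists a, a \in ~: [set (\sum_(u in N v) l' u)%R | v in X].
  apply/card_gt0P; rewrite cardsCs setCK subn_gt0.
  exact: leq_ltn_trans (leq_imset_card _ _) (leq_ltn_trans X_le D_lt).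
rewrite inE => a_new.
exists (fun u => l' u + a *+ (u \in S))%R => v vU0.
have sumE : (\sum_(u in N v) (l' u + a *+ (u \in S)) =
             \sum_(u in N v) l' u + a *+ odd #|N v :&: S|)%R.
  rewrite big_split /= sumrMnr mulrn_odd sum_nat_of_bool.
  by congr (_ + a *+ odd #|_|)%R; apply/setP => u; rewrite !inE.
have oddE : odd #|N v :&: S| = (v \in X) by rewrite inE vU0.
rewrite sumE oddE; case: (boolP (v \in X)) => vX.
  rewrite mulr1n addr_eq0 oppr_id; apply: contraNneq a_new => <-.
  exact: imset_f.
by rewrite mulr0n addr0 hl' // inE vX.
Qed.

End ParityLabelling.

Lemma addxx_rV_Z2 j (x : 'rV['Z_2]_j) : (x + x = 0)%R.
Proof. by apply/rowP => i; rewrite !mxE -mulr2n -mulr_natr pchar_Zp ?mulr0. Qed.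

Lemma card_rV_Z2 j : #|{: 'rV['Z_2]_j}| = 2 ^ j.
Proof. by rewrite card_mx card_ord mul1n. Qed.

Theorem theorem1p2 :
  forall r : nat, exists k : nat,
  forall (T : finType) (e : rel T),
    symmetric e -> irreflexive e ->
    (forall m : nat, 0 < m -> nbhd_complexity e m <= r * m) ->
    exists c : T -> 'I_k,
      forall v : T, nbhd e v != set0 ->
        exists i : 'I_k, odd #|[set u in nbhd e v | c u == i]|.
Proof.
move=> r; exists #|{: 'rV['Z_2]_(odd_bound r)}| => T e esym _ heta.
have [U0 [U0nz U0inj U0cover]] := exists_transversal (nbhd e) [set v | nbhd e v != set0].
have small_odd (U : {set T}) : U \subset U0 -> U != set0 ->
    exists S, 0 < #|[set v in U | odd #|nbhd e v :&: S|]| <= odd_bound r.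
  move=> /subsetP UU0 U_neq0; apply: (exists_small_odd_set esym heta U_neq0).
    by move=> v w /UU0 vU0 /UU0 wU0; apply: U0inj.
  by move=> v /UU0 /(subsetP U0nz); rewrite inE.
have card_colors : odd_bound r < #|{: 'rV['Z_2]_(odd_bound r)}|.
  by rewrite card_rV_Z2 ltn_expl.
have [l hl] := exists_parity_labelling (@addxx_rV_Z2 _) card_colors small_odd.
exists (fun u => enum_rank (l u)) => v v_nz.
have [u uU0 Nuv] : exists2 u, u \in U0 & nbhd e u = nbhd e v.
  by apply: U0cover; rewrite inE.
have [w odd_w] := exists_odd_fibre (@addxx_rV_Z2 _) (hl u uU0).
exists (enum_rank w); rewrite -Nuv; congr (odd _): odd_w.
by apply: eq_card => x; rewrite !inE (inj_eq enum_rank_inj).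
Qed.
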